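(* Let $J=JCK(Z,\delta)$ and $K=Z\oplus Zx$. Relative to the $\mathbb Z_2^2$-grading of $\mathrm{Der}(J)$ induced by the grading of $J$, one has $\mathrm{Der}(J)_{\bar0}^{[\bar0,\bar0]}=\{\tilde\partial:\partial\in\mathrm{Der}(K)_{\bar0}\}$, $\mathrm{Inder}(J)_{\bar0}^{[\bar0,\bar0]}=D(x,Zx)=\{\tilde\partial:\partial\in\mathrm{Inder}(K)_{\bar0}\}=\{\tilde\partial:\partial=\check\mu \text{ for some }\mu\in Z\delta\}$, $\mathrm{Der}(J)_{\bar0}^{[\bar1,\bar0]}=D(w_2,Zw_3)$, $\mathrm{Der}(J)_{\bar0}^{[\bar0,\bar1]}=D(w_3,Zw_1)$, $\mathrm{Der}(J)_{\bar0}^{[\bar1,\bar1]}=D(w_1,Zw_2)$, and $\mathrm{Der}(J)_{\bar0}$ is the direct sum of these four components; in particular every even derivation of $J$ with component outside $[\bar0,\bar0]$ is inner.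
   Context: Let $\mathbb F$ be a field of characteristic $\neq 2$, $Z$ a unital commutative associative $\mathbb F$-algebra, and $\delta$ a derivation of $Z$ such that $Z\delta(Z)=Z$ (the $\mathbb F$-span of all products $f\delta(g)$, $f,g\in Z$, is $Z$). The Cheng-Kac Jordan superalgebra $J=JCK(Z,\delta)=J_{\bar0}\oplus J_{\bar1}$ is defined as follows: $J_{\bar0}=Z1\oplus Zw_1\oplus Zw_2\oplus Zw_3$ and $J_{\bar1}=Zx\oplus Zx_1\oplus Zx_2\oplus Zx_3$ are free $Z$-modules of rank 4; $J_{\bar0}$ is the $Z$-algebra $(\mathbb F1\oplus\mathbb Fw_1\oplus\mathbb Fw_2\oplus\mathbb Fw_3)\otimes_{\mathbb F}Z$ with $1$ the identity, $w_1^2=w_2^2=1$, $w_3^2=-1$, $w_iw_j=0$ for $i\ne j$. For $f,g\in Z$ and $i,j\in\{1,2,3\}$ the remaining products are: $f(gx)=(fg)x$, $f(gx_j)=(fg)x_j$, $(fw_i)(gx)=(\delta(f)g)x_i$, $(fw_i)(gx_j)=-(fg)x_{i\times j}$, $(fx)(gx)=\delta(f)g-f\delta(g)$, $(fx)(gx_j)=-(fg)w_j$, $(fx_i)(gx)=(fg)w_i$, $(fx_i)(gx_j)=0$, extended by supercommutativity ($ab=(-1)^{|a||b|}ba$), where $x_{1\times2}=-x_{2\times1}=x_3$, $x_{1\times3}=-x_{3\times1}=x_2$, $x_{3\times2}=-x_{2\times3}=x_1$, $x_{i\times i}=0$. $J$ is $\mathbb Z_2^2$-graded by $J^{[\bar0,\bar0]}=Z\oplus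 Zx$, $J^{[\bar1,\bar0]}=Zw_1\oplus Zx_1$, $J^{[\bar0,\bar1]}=Zw_2\oplus Zx_2$, $J^{[\bar1,\bar1]}=Zw_3\oplus Zx_3$, and $\mathrm{Der}(J)^{\alpha}$ denotes the derivations mapping each $J^{\beta}$ into $J^{\alpha+\beta}$. Derivations are super derivations (homogeneous $d$ with $d(ab)=d(a)b+(-1)^{|d||a|}ad(b)$); $D(a,b)$ is $c\mapsto a(bc)-(-1)^{|a||b|}b(ac)$; $\mathrm{Inder}$ is the span of all $D(a,b)$; $D(A,B)$ denotes the span of $D(a,b)$, $a\in A,b\in B$. $K=Z\oplus Zx$ is a subalgebra of $J$. For $\mu\in\mathrm{Der}(Z)$ with $[\mu,\delta]=2a\delta$, $\check\mu$ is the even derivation of $K$ with $\check\mu|_Z=\mu$, $\check\mu(x)=ax$; every even derivation of $K$ is of this form. For $\partial\in\mathrm{Der}(K)_{\bar0}$ with $\mu=\partial|_Z$ and $a\in Z$ such that $\partial(x)=ax$, $\tilde\partial$ denotes the even derivation of $J$ given by $\tilde\partial|_K=\partial$, $\tilde\partial(fw_i)=\mu(f)w_i$, $\tilde\partial(fx_i)=(\mu(f)-af)x_i$ for $f\in Z$, $i=1,2,3$. *)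

From HB Require Import structures.
From mathcomp Require Import all_boot all_order all_algebra.
Set Implicit Arguments. Unset Strict Implicit. Unset Printing Implicit Defensive.
Import GRing.Theory.
Local Open Scope ring_scope.

(* An element of J is stored as ((f0,f1,f2,f3),(g0,g1,g2,g3)) meaning
   f0*1 + f1 w1 + f2 w2 + f3 w3 + g0 x + g1 x1 + g2 x2 + g3 x3,
   so J_0 is the first component and J_1 the second one. *)

Section CK.
Context {F : fieldType} {Z : comAlgType F}.

Definition J : Type := ((Z * Z * Z * Z) * (Z * Z * Z * Z))%type.

Definition mkJ (f0 f1 f2 f3 g0 g1 g2 g3 : Z) : J :=
  ((f0, f1, f2, f3), (g0, g1, g2, g3)).

Definition e0 (a : J) : Z := a.1.1.1.1.
Definition e1 (a : J) : Z := a.1.1.1.2.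
Definition e2 (a : J) : Z := a.1.1.2.
Definition e3 (a : J) : Z := a.1.2.
Definition o0 (a : J) : Z := a.2.1.1.1.
Definition o1 (a : J) : Z := a.2.1.1.2.
Definition o2 (a : J) : Z := a.2.1.2.
Definition o3 (a : J) : Z := a.2.2.

(* the product, obtained by bilinear extension of the multiplication table
   (and supercommutativity) of the context *)
Definition Jmul (delta : Z -> Z) (a b : J) : J :=
  mkJ
    (e0 a * e0 b + e1 a * e1 b + e2 a * e2 b - e3 a * e3 b
       + (delta (o0 a) * o0 b - o0 a * delta (o0 b)))
    (e0 a * e1 b + e1 a * e0 b + (- (o0 a * o1 b) + o1 a * o0 b))
    (e0 a * e2 b + e2 a * e0 b + (- (o0 a * o2 b) + o2 a * o0 b))
    (e0 a * e3 b + e3 a * e0 b + (- (o0 a * o3 b) + o3 a * o0 b))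
    (e0 a * o0 b + e0 b * o0 a)
    ((e0 a * o1 b + delta (e1 a) * o0 b - e3 a * o2 b + e2 a * o3 b)
     + (e0 b * o1 a + delta (e1 b) * o0 a - e3 b * o2 a + e2 b * o3 a))
    ((e0 a * o2 b + delta (e2 a) * o0 b - e1 a * o3 b + e3 a * o1 b)
     + (e0 b * o2 a + delta (e2 b) * o0 a - e1 b * o3 a + e3 b * o1 a))
    ((e0 a * o3 b + delta (e3 a) * o0 b - e1 a * o2 b + e2 a * o1 b)
     + (e0 b * o3 a + delta (e3 b) * o0 a - e1 b * o2 a + e2 b * o1 a)).

Definition isEven (a : J) : Prop := a.2 = 0.
Definition isOdd (a : J) : Prop := a.1 = 0.
Definition homog (p : bool) (a : J) : Prop := if p then isOdd a else isEven a.

Definition ecoord (i : 'I_4) (a : J) : Z :=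
  match val i with 0%N => e0 a | 1%N => e1 a | 2%N => e2 a | _ => e3 a end.
Definition ocoord (i : 'I_4) (a : J) : Z :=
  match val i with 0%N => o0 a | 1%N => o1 a | 2%N => o2 a | _ => o3 a end.
Definition degOf (i : 'I_4) : bool * bool := (odd (val i), (2 <= val i)%N).
Definition inGr (al : bool * bool) (a : J) : Prop :=
  forall i : 'I_4, degOf i <> al -> ecoord i a = 0 /\ ocoord i a = 0.
Definition addGr (al be : bool * bool) : bool * bool :=
  (addb al.1 be.1, addb al.2 be.2).

Definition linJ (d : J -> J) : Prop :=
  forall (k : F) (u v : J), d (k *: u + v) = k *: d u + d v.
Definition evenMapJ (d : J -> J) : Prop :=
  (forall a, isEven a -> isEven (d a)) /\ (forall a, isOdd a -> isOdd (d a)).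
Definition gradMapJ (al : bool * bool) (d : J -> J) : Prop :=
  forall be a, inGr be a -> inGr (addGr al be) (d a).
Definition DerJ0 (delta : Z -> Z) (d : J -> J) : Prop :=
  linJ d /\ evenMapJ d /\
  forall a b, d (Jmul delta a b) = Jmul delta (d a) b + Jmul delta a (d b).
Definition DerJ0g (delta : Z -> Z) (al : bool * bool) (d : J -> J) : Prop :=
  DerJ0 delta d /\ gradMapJ al d.

Definition Dop (delta : Z -> Z) (pa pb : bool) (a b : J) : J -> J :=
  fun c => Jmul delta a (Jmul delta b c)
           - ((-1 : F) ^+ (pa && pb)) *: Jmul delta b (Jmul delta a c).

Definition Dspan (delta : Z -> Z) (A B : J -> Prop) (pA pB : bool)
    (d : J -> J) : Prop :=
  exists (n : nat) (k : 'I_n -> F) (xs ys : 'I_n -> J),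
    (forall i, A (xs i) /\ B (ys i)) /\
    forall c, d c = \sum_(i < n) k i *: Dop delta pA pB (xs i) (ys i) c.

Definition InderJ (delta : Z -> Z) (d : J -> J) : Prop :=
  exists (n : nat) (k : 'I_n -> F) (pa pb : 'I_n -> bool) (xs ys : 'I_n -> J),
    (forall i, homog (pa i) (xs i) /\ homog (pb i) (ys i)) /\
    forall c, d c = \sum_(i < n) k i *: Dop delta (pa i) (pb i) (xs i) (ys i) c.

Definition InderJ00 (delta : Z -> Z) (d : J -> J) : Prop :=
  InderJ delta d /\ evenMapJ d /\ gradMapJ (false, false) d.

Definition xJ : J := mkJ 0 0 0 0 1 0 0 0.
Definition w1 : J := mkJ 0 1 0 0 0 0 0 0.
Definition w2 : J := mkJ 0 0 1 0 0 0 0 0.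
Definition w3 : J := mkJ 0 0 0 1 0 0 0 0.
Definition ZxJ (b : J) : Prop := exists g : Z, b = mkJ 0 0 0 0 g 0 0 0.
Definition Zw1 (b : J) : Prop := exists f : Z, b = mkJ 0 f 0 0 0 0 0 0.
Definition Zw2 (b : J) : Prop := exists f : Z, b = mkJ 0 0 f 0 0 0 0 0.
Definition Zw3 (b : J) : Prop := exists f : Z, b = mkJ 0 0 0 f 0 0 0 0.

(* The subalgebra K = Z + Zx; (f, g) : K stands for f + g x *)
Definition K : Type := (Z * Z)%type.
Definition iK (k : K) : J := mkJ k.1 0 0 0 k.2 0 0 0.
Definition pK (a : J) : K := (e0 a, o0 a).
Definition Kmul (delta : Z -> Z) (k l : K) : K := pK (Jmul delta (iK k) (iK l)).

Definition isEvenK (k : K) : Prop := k.2 = 0.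
Definition isOddK (k : K) : Prop := k.1 = 0.
Definition homogK (p : bool) (k : K) : Prop := if p then isOddK k else isEvenK k.
Definition linK (d : K -> K) : Prop :=
  forall (c : F) (u v : K), d (c *: u + v) = c *: d u + d v.
Definition evenMapK (d : K -> K) : Prop :=
  (forall k, isEvenK k -> isEvenK (d k)) /\ (forall k, isOddK k -> isOddK (d k)).
Definition DerK0 (delta : Z -> Z) (d : K -> K) : Prop :=
  linK d /\ evenMapK d /\
  forall k l, d (Kmul delta k l) = Kmul delta (d k) l + Kmul delta k (d l).
Definition DopK (delta : Z -> Z) (pa pb : bool) (a b : K) : K -> K :=
  fun c => Kmul delta a (Kmul delta b c)
           - ((-1 : F) ^+ (pa && pb)) *: Kmul delta b (Kmul delta a c).
Definition InderK (delta : Z -> Z) (d : K -> K) : Prop :=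
  exists (n : nat) (k : 'I_n -> F) (pa pb : 'I_n -> bool) (xs ys : 'I_n -> K),
    (forall i, homogK (pa i) (xs i) /\ homogK (pb i) (ys i)) /\
    forall c, d c = \sum_(i < n) k i *: DopK delta (pa i) (pb i) (xs i) (ys i) c.
Definition InderK0 (delta : Z -> Z) (d : K -> K) : Prop :=
  InderK delta d /\ evenMapK d.

Definition checkK (mu : Z -> Z) (a : Z) : K -> K :=
  fun k => (mu k.1, mu k.2 + a * k.2).

Definition tildeJ (d : K -> K) : J -> J :=
  let mu := fun f : Z => (d (f, 0)).1 in
  let a := (d (0, 1)).2 in
  fun c => iK (d (e0 c, o0 c))
           + mkJ 0 (mu (e1 c)) (mu (e2 c)) (mu (e3 c))
                 0 (mu (o1 c) - a * o1 c) (mu (o2 c) - a * o2 c)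
                   (mu (o3 c) - a * o3 c).

End CK.

(* An even derivation d of J is determined by a derivation mu of Z with
   [mu, delta] = 2 a delta (its restriction to Z, with a read off from d(x)) and by
   three elements f1, f2, f3 of Z (read off from d(w1) and d(w2)): d is
   [evenDerJ mu a f1 f2 f3].  Indeed the difference of the two vanishes on Z, w_i and x,
   hence also on x_i, since delta(g) x_i = (g w_i) x and Z delta(Z) = Z.  The
   (mu, a)-part is tilde(check mu), of degree [0,0]; the f_i-parts are D(w2, f1 w3),
   D(w3, f2 w1) and D(w1, f3 w2), of degrees [1,0], [0,1] and [1,1].  Dually, the even
   part of D(a, b) for homogeneous a, b has the same shape with mu = -2 g delta and
   a = delta g; in degree [0,0] this is D(x, g x), and conversely [mu, delta] = 2 a delta
   with mu = h delta forces delta h = -2 a, i.e. h = -2 g with a = delta g. *)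

From HB Require Import structures.
From mathcomp Require Import all_boot all_order all_algebra.
From Stdlib Require Import Ring FunctionalExtensionality.
Import GRing.Theory.
Local Open Scope ring_scope.
Set Implicit Arguments. Unset Strict Implicit. Unset Printing Implicit Defensive.

Lemma linear_fun_sum (R : pzRingType) (U V : lmodType R) (L : U -> V)
    (L_linear : forall k u v, L (k *: u + v) = k *: L u + L v)
    n (k : 'I_n -> R) (u : 'I_n -> U) :
  L (\sum_(i < n) k i *: u i) = \sum_(i < n) k i *: L (u i).
Proof.
have L0 : L 0 = 0.
  have := L_linear 1 0 0; rewrite scaler0 addr0 scale1r => H.
  by apply: (addrI (L 0)); rewrite -H addr0.
by elim/big_rec2: _ => // i y1 y2 _ <-; rewrite L_linear.
Qed.

Section ChengKacDerivations.
Variables (F : fieldType) (Z : comAlgType F) (delta : Z -> Z).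
Hypothesis char_neq2 : 2%N \notin [pchar F].
Hypothesis delta_linear :
  forall (k : F) (u v : Z), delta (k *: u + v) = k *: delta u + delta v.
Hypothesis delta_leibniz : forall u v : Z, delta (u * v) = delta u * v + u * delta v.
Hypothesis delta_span : forall z : Z, exists (n : nat) (k : 'I_n -> F) (fs gs : 'I_n -> Z),
  z = \sum_(i < n) k i *: (fs i * delta (gs i)).

Local Notation J := (@J F Z).
Local Notation K := (@K F Z).

(* Stdlib's [ring] is much faster on these large identities than the reflexive
   [ring] of algebra-tactics, but it matches the ring operations syntactically;
   [zring] first rewrites them over a single instance path. *)
Definition zadd (x y : Z) : Z := x + y.
Definition zmul (x y : Z) : Z := x * y.
Definition zopp (x : Z) : Z := - x.
Definition zsub (x y : Z) : Z := x - y.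
Definition zzero : Z := 0.
Definition zone : Z := 1.

Lemma Z_ring_theory : @ring_theory Z zzero zone zadd zmul zsub zopp eq.
Proof.
split=> *; [exact: add0r | exact: addrC | exact: addrA | exact: mul1r | exact: mulrC
  | exact: mulrA | exact: mulrDl | done | exact: subrr].
Qed.
Add Ring Z_ring : Z_ring_theory.

Ltac zterm t :=
  lazymatch t with
  | @Algebra.add _ ?x ?y => let x' := zterm x in let y' := zterm y in constr:(zadd x' y')
  | @GRing.mul _ ?x ?y => let x' := zterm x in let y' := zterm y in constr:(zmul x' y')
  | @Algebra.opp _ ?x => let x' := zterm x in constr:(zopp x')
  | @Algebra.zero _ => constr:(zzero)
  | @GRing.one _ => constr:(zone)
  | _ => t
  end.
Ltac zring := lazymatch goal with |- ?x = ?y =>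
  let x' := zterm x in let y' := zterm y in change (@eq Z x' y'); ring end.

(* Scalars [k *: x] are normalised to [cst k * x]; [cst] stays folded, since
   [scaleE] would fire again on the [k *: 1] hidden in [k%:A]. *)
Definition cst (k : F) : Z := k%:A.
Arguments cst : simpl never.

Lemma scaleE (k : F) (x : Z) : k *: x = cst k * x.
Proof. by rewrite /cst mulr_algl. Qed.

Lemma deltaD u v : delta (u + v) = delta u + delta v.
Proof. by rewrite -[u in LHS]scale1r delta_linear scale1r. Qed.

Lemma delta0 : delta 0 = 0.
Proof. by apply: (addrI (delta 0)); rewrite -deltaD !addr0. Qed.

Lemma deltaN u : delta (- u) = - delta u.
Proof. by apply/eqP; rewrite -subr_eq0 opprK -deltaD addNr delta0. Qed.

Lemma deltaZ k u : delta (k *: u) = k *: delta u.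
Proof. by rewrite -[k *: u]addr0 delta_linear delta0 addr0. Qed.

Lemma delta1 : delta 1 = 0.
Proof.
have := delta_leibniz 1 1; rewrite !mul1r mulr1 => H.
by apply: (addrI (delta 1)); rewrite -H addr0.
Qed.

Lemma delta_cst k : delta (cst k) = 0.
Proof. by rewrite /cst deltaZ delta1 scaler0. Qed.

Ltac dpush := rewrite ?(deltaD, deltaN, delta_leibniz, delta0, delta1, delta_cst).

(* With the coordinate maps unfolded by [cbn], the coordinates of sums, scalings,
   products and basis elements of [J] compute. *)
Arguments e0 /. Arguments e1 /. Arguments e2 /. Arguments e3 /.
Arguments o0 /. Arguments o1 /. Arguments o2 /. Arguments o3 /.

Ltac coords := cbn; rewrite ?scaleE.
Ltac zcomp := coords; dpush; zring.

Lemma Jext (u v : J) : e0 u = e0 v -> e1 u = e1 v -> e2 u = e2 v -> e3 u = e3 v ->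
  o0 u = o0 v -> o1 u = o1 v -> o2 u = o2 v -> o3 u = o3 v -> u = v.
Proof.
case: u => [[[[? ?] ?] ?] [[[? ?] ?] ?]]; case: v => [[[[? ?] ?] ?] [[[? ?] ?] ?]].
by cbn => -> -> -> -> -> -> -> ->.
Qed.

Ltac jcomp := apply: Jext; zcomp.

Lemma two_neq0 : (2%:R : F) != 0.
Proof. by apply: contraNneq char_neq2 => h2; rewrite inE /= h2 eqxx. Qed.

Lemma double_eq0 (u : Z) : u + u = 0 -> u = 0.
Proof.
move=> H; have : (2%:R : F) *: u = 0 by rewrite scaler_nat mulr2n.
by move/eqP; rewrite scaler_eq0 (negbTE two_neq0) => /eqP.
Qed.

Lemma double_inj (u v : Z) : u + u = v + v -> u = v.
Proof.
by move=> H; apply/eqP; rewrite -subr_eq0; apply/eqP/double_eq0; rewrite addrACA -opprD H subrr.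
Qed.

Lemma opp_eq0 (x : Z) : 0 = - x -> x = 0.
Proof. by move/esym/eqP; rewrite oppr_eq0 => /eqP. Qed.

Lemma half_exists (h : Z) : exists g, g + g = h.
Proof.
exists ((2%:R : F)^-1 *: h); rewrite -scalerDl.
have -> : (2%:R : F)^-1 + 2%:R^-1 = 2%:R * 2%:R^-1 by rewrite mulr_natl mulr2n.
by rewrite mulfV ?two_neq0 // scale1r.
Qed.

(* This is where the hypothesis Z delta(Z) = Z is used. *)
Lemma delta_annihilator_eq0 (z : Z) : (forall g, delta g * z = 0) -> z = 0.
Proof.
move=> H; have [n [k [fs [gs H1]]]] := delta_span 1.
rewrite -[z]mul1r H1 mulr_suml big1 // => i _.
by rewrite -scalerAl -mulrA H mulr0 scaler0.
Qed.

Lemma JmulDr u v w : Jmul delta w (u + v) = Jmul delta w u + Jmul delta w v.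
Proof. jcomp. Qed.
Lemma Jmul0l u : Jmul delta 0 u = 0. Proof. jcomp. Qed.
Lemma Jmul0r u : Jmul delta u 0 = 0. Proof. jcomp. Qed.

Definition iZ (h : Z) : J := mkJ h 0 0 0 0 0 0 0.
Definition xJ1 : J := mkJ 0 0 0 0 0 1 0 0.
Definition xJ2 : J := mkJ 0 0 0 0 0 0 1 0.
Definition xJ3 : J := mkJ 0 0 0 0 0 0 0 1.

Lemma iZ_linear k u v : iZ (k *: u + v) = k *: iZ u + iZ v. Proof. jcomp. Qed.
Lemma iZ_mul u v : iZ (u * v) = Jmul delta (iZ u) (iZ v). Proof. jcomp. Qed.
Lemma Jmul1l u : Jmul delta (iZ 1) u = u. Proof. jcomp. Qed.
Lemma Jmul1r u : Jmul delta u (iZ 1) = u. Proof. jcomp. Qed.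

Lemma w1_sqr : Jmul delta w1 w1 = iZ 1. Proof. jcomp. Qed.
Lemma w2_sqr : Jmul delta w2 w2 = iZ 1. Proof. jcomp. Qed.
Lemma w3_sqr : Jmul delta w3 w3 = - iZ 1. Proof. jcomp. Qed.
Lemma w1w2 : Jmul delta w1 w2 = 0. Proof. jcomp. Qed.
Lemma w1w3 : Jmul delta w1 w3 = 0. Proof. jcomp. Qed.
Lemma w2w3 : Jmul delta w2 w3 = 0. Proof. jcomp. Qed.
Lemma w1x : Jmul delta w1 xJ = 0. Proof. jcomp. Qed.
Lemma w2x : Jmul delta w2 xJ = 0. Proof. jcomp. Qed.
Lemma x_iZ_x u : Jmul delta xJ (Jmul delta (iZ u) xJ) = - iZ (delta u). Proof. jcomp. Qed.
Lemma w1_iZ_w1 h : Jmul delta w1 (Jmul delta (iZ h) w1) = iZ h. Proof. jcomp. Qed.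
Lemma w2_iZ_w2 h : Jmul delta w2 (Jmul delta (iZ h) w2) = iZ h. Proof. jcomp. Qed.
Lemma iZw1_x g : Jmul delta (Jmul delta (iZ g) w1) xJ = Jmul delta (iZ (delta g)) xJ1.
Proof. jcomp. Qed.
Lemma iZw2_x g : Jmul delta (Jmul delta (iZ g) w2) xJ = Jmul delta (iZ (delta g)) xJ2.
Proof. jcomp. Qed.
Lemma iZw3_x g : Jmul delta (Jmul delta (iZ g) w3) xJ = Jmul delta (iZ (delta g)) xJ3.
Proof. jcomp. Qed.

Lemma J_generators c : c = iZ (e0 c) + Jmul delta (iZ (e1 c)) w1 + Jmul delta (iZ (e2 c)) w2
  + Jmul delta (iZ (e3 c)) w3 + Jmul delta (iZ (o0 c)) xJ + Jmul delta (iZ (o1 c)) xJ1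
  + Jmul delta (iZ (o2 c)) xJ2 + Jmul delta (iZ (o3 c)) xJ3.
Proof. jcomp. Qed.

Lemma evenJ_eq0 (u : J) : isEven u -> e0 u = 0 -> e1 u = 0 -> e2 u = 0 -> e3 u = 0 -> u = 0.
Proof. by move=> ev *; apply: Jext; rewrite //= ev. Qed.

Lemma oddJ_eq0 (u : J) : isOdd u -> o0 u = 0 -> o1 u = 0 -> o2 u = 0 -> o3 u = 0 -> u = 0.
Proof. by move=> od *; apply: Jext; rewrite //= od. Qed.

Lemma delta_annihilatorJ_eq0 (v : J) : (forall g, Jmul delta (iZ (delta g)) v = 0) -> v = 0.
Proof.
move=> H; apply: Jext; apply: delta_annihilator_eq0 => g;
  lazymatch goal with |- _ * ?coord v = 0 =>
    transitivity (coord (Jmul delta (iZ (delta g)) v)); by [zcomp | rewrite H] end.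
Qed.

Definition twisted_der (mu : Z -> Z) (a : Z) : Prop :=
  [/\ forall k u v, mu (k *: u + v) = k *: mu u + mu v,
      forall u v, mu (u * v) = mu u * v + u * mu v &
      forall u, mu (delta u) = delta (mu u) + (a + a) * delta u].

Section TwistedDerivation.
Variables (mu : Z -> Z) (a : Z).
Hypothesis mu_twisted : twisted_der mu a.

Lemma muD u v : mu (u + v) = mu u + mu v.
Proof. by case: mu_twisted => lin _ _; rewrite -[u in LHS]scale1r lin scale1r. Qed.

Lemma mu0 : mu 0 = 0.
Proof. by apply: (addrI (mu 0)); rewrite -muD !addr0. Qed.

Lemma muN u : mu (- u) = - mu u.
Proof. by apply/eqP; rewrite -subr_eq0 opprK -muD addNr mu0. Qed.

Lemma muZ k u : mu (k *: u) = k *: mu u.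
Proof. by case: mu_twisted => lin _ _; rewrite -[k *: u]addr0 lin mu0 addr0. Qed.

Lemma muM u v : mu (u * v) = mu u * v + u * mu v.
Proof. by case: mu_twisted. Qed.

Lemma mu_delta u : mu (delta u) = delta (mu u) + (a + a) * delta u.
Proof. by case: mu_twisted. Qed.

Lemma mu1 : mu 1 = 0.
Proof.
have := muM 1 1; rewrite !mul1r mulr1 => H.
by apply: (addrI (mu 1)); rewrite -H addr0.
Qed.

Lemma mu_cst k : mu (cst k) = 0.
Proof. by rewrite /cst muZ mu1 scaler0. Qed.

End TwistedDerivation.

Ltac mpush H := rewrite ?(muD H, muN H, muM H, mu0 H, mu1 H, mu_cst H, mu_delta H).

Lemma twisted_der0 : twisted_der (fun _ => 0) 0.
Proof. by split=> * /=; rewrite ?scaleE ?delta0; zring. Qed.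

(* [evenDerJ mu a f1 f2 f3] is tilde(check mu) + D(w2, f1 w3) + D(w3, f2 w1) + D(w1, f3 w2),
   where check mu maps x to a x. *)
Definition evenDerJ (mu : Z -> Z) (a f1 f2 f3 : Z) (c : J) : J := mkJ
  (mu (e0 c))
  (mu (e1 c) + f2 * e3 c + f3 * e2 c)
  (mu (e2 c) - f1 * e3 c - f3 * e1 c)
  (mu (e3 c) - f1 * e2 c + f2 * e1 c)
  (mu (o0 c) + a * o0 c)
  (mu (o1 c) - a * o1 c + delta f1 * o0 c + f2 * o3 c + f3 * o2 c)
  (mu (o2 c) - a * o2 c - f1 * o3 c + delta f2 * o0 c - f3 * o1 c)
  (mu (o3 c) - a * o3 c - f1 * o2 c + f2 * o1 c - delta f3 * o0 c).

Section EvenDerJ.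
Variables (mu : Z -> Z) (a f1 f2 f3 : Z).
Hypothesis mu_twisted : twisted_der mu a.
Local Notation d := (evenDerJ mu a f1 f2 f3).

Lemma evenDerJ_linear k u v : d (k *: u + v) = k *: d u + d v.
Proof. by apply: Jext; coords; mpush mu_twisted; dpush; zring. Qed.

Lemma evenDerJ_add u v : d (u + v) = d u + d v.
Proof. by have := evenDerJ_linear 1 u v; rewrite !scale1r. Qed.

Lemma evenDerJ_leibniz u v : d (Jmul delta u v) = Jmul delta (d u) v + Jmul delta u (d v).
Proof. by apply: Jext; coords; mpush mu_twisted; dpush; zring. Qed.

Lemma evenDerJ_even : evenMapJ d.
Proof.
by split=> u uP; rewrite /isEven /isOdd /=; rewrite uP /= (mu0 mu_twisted);
  congr (_, _, _, _); zring.
Qed.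

Lemma evenDerJ_der : DerJ0 delta d.
Proof.
by split; [exact: evenDerJ_linear | split; [exact: evenDerJ_even | exact: evenDerJ_leibniz]].
Qed.

End EvenDerJ.

Section VanishingDerivation.
Variable E : J -> J.
Hypothesis E_add : forall u v : J, E (u + v) = E u + E v.
Hypothesis E_leibniz :
  forall u v : J, E (Jmul delta u v) = Jmul delta (E u) v + Jmul delta u (E v).
Hypothesis E_even : forall u, isEven u -> isEven (E u).
Hypothesis E_odd : forall u, isOdd u -> isOdd (E u).
Hypothesis E_iZ_e0 : forall h, e0 (E (iZ h)) = 0.
Hypothesis E_x_o0 : o0 (E xJ) = 0.
Hypothesis E_w1_e2 : e2 (E w1) = 0.
Hypothesis E_w1_e3 : e3 (E w1) = 0.
Hypothesis E_w2_e3 : e3 (E w2) = 0.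

Let E0 : E 0 = 0.
Proof. by apply: (addrI (E 0)); rewrite -E_add !addr0. Qed.

Let EN u : E (- u) = - E u.
Proof. by apply/eqP; rewrite -subr_eq0 opprK -E_add addNr E0. Qed.

Let E_one : E (iZ 1) = 0.
Proof.
have := E_leibniz (iZ 1) (iZ 1); rewrite Jmul1r Jmul1r Jmul1l => H.
by apply: (addrI (E (iZ 1))); rewrite -H addr0.
Qed.

Let E_annihilated (w v : J) : E w = 0 -> Jmul delta w v = 0 -> Jmul delta w (E v) = 0.
Proof. by move=> Ew wv; have := E_leibniz w v; rewrite wv E0 Ew Jmul0l add0r => /esym. Qed.

Let E_w1 : E w1 = 0.
Proof.
have sq : Jmul delta (E w1) w1 + Jmul delta w1 (E w1) = 0 by rewrite -E_leibniz w1_sqr E_one.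
apply: evenJ_eq0 => //; first exact: E_even.
- apply: double_eq0.
  by transitivity (e1 (Jmul delta (E w1) w1 + Jmul delta w1 (E w1))); [zcomp | rewrite sq].
- apply: double_eq0.
  by transitivity (e0 (Jmul delta (E w1) w1 + Jmul delta w1 (E w1))); [zcomp | rewrite sq].
Qed.

Let E_w2 : E w2 = 0.
Proof.
have sq : Jmul delta (E w2) w2 + Jmul delta w2 (E w2) = 0 by rewrite -E_leibniz w2_sqr E_one.
have m12 := E_annihilated E_w1 w1w2.
apply: evenJ_eq0 => //; first exact: E_even.
- apply: double_eq0.
  by transitivity (e2 (Jmul delta (E w2) w2 + Jmul delta w2 (E w2))); [zcomp | rewrite sq].
- by transitivity (e0 (Jmul delta w1 (E w2))); [zcomp | rewrite m12].
- apply: double_eq0.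
  by transitivity (e0 (Jmul delta (E w2) w2 + Jmul delta w2 (E w2))); [zcomp | rewrite sq].
Qed.

Let E_w3 : E w3 = 0.
Proof.
have sq : Jmul delta (E w3) w3 + Jmul delta w3 (E w3) = 0.
  by rewrite -E_leibniz w3_sqr EN E_one oppr0.
have m13 := E_annihilated E_w1 w1w3.
have m23 := E_annihilated E_w2 w2w3.
apply: evenJ_eq0; first exact: E_even.
- apply: double_eq0.
  by transitivity (e3 (Jmul delta (E w3) w3 + Jmul delta w3 (E w3))); [zcomp | rewrite sq].
- by transitivity (e0 (Jmul delta w1 (E w3))); [zcomp | rewrite m13].
- by transitivity (e0 (Jmul delta w2 (E w3))); [zcomp | rewrite m23].
- apply: double_eq0.
  by transitivity (- e0 (Jmul delta (E w3) w3 + Jmul delta w3 (E w3))); [zcomp | rewrite sq oppr0].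
Qed.

Let E_iZ h : E (iZ h) = 0.
Proof.
have E_conj (w : J) : E w = 0 -> E (Jmul delta w (Jmul delta (iZ h) w)) =
    Jmul delta w (Jmul delta (E (iZ h)) w).
  by move=> Ew; rewrite !E_leibniz Ew Jmul0l Jmul0r add0r addr0.
have E1 := E_conj _ E_w1; have E2 := E_conj _ E_w2.
rewrite w1_iZ_w1 in E1; rewrite w2_iZ_w2 in E2.
apply: evenJ_eq0 => //; first exact: E_even.
- by rewrite E2; zcomp.
- by rewrite E1; zcomp.
- by rewrite E1; zcomp.
Qed.

Let E_x : E xJ = 0.
Proof.
have m1 := E_annihilated E_w1 w1x.
have m2 := E_annihilated E_w2 w2x.
apply: oddJ_eq0 => //; first exact: E_odd.
- by transitivity (o3 (Jmul delta w2 (E xJ))); [zcomp | rewrite m2].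
- by transitivity (- o3 (Jmul delta w1 (E xJ))); [zcomp | rewrite m1 oppr0].
- by transitivity (- o2 (Jmul delta w1 (E xJ))); [zcomp | rewrite m1 oppr0].
Qed.

(* [delta g x_i = (g w_i) x], so [E] kills [delta(Z) x_i], hence [x_i]. *)
Let E_xi (w xi : J) : E w = 0 ->
  (forall g, Jmul delta (Jmul delta (iZ g) w) xJ = Jmul delta (iZ (delta g)) xi) -> E xi = 0.
Proof.
move=> Ew wx; apply: delta_annihilatorJ_eq0 => g.
have := E_leibniz (iZ (delta g)) xi; rewrite E_iZ Jmul0l add0r => <-.
by rewrite -wx !E_leibniz E_x E_iZ Ew !(Jmul0l, Jmul0r, addr0).
Qed.

Lemma derivation_eq0_on_generators c : E c = 0.
Proof.
rewrite (J_generators c) !E_add !E_leibniz !E_iZ E_w1 E_w2 E_w3 E_x.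
rewrite (E_xi E_w1 iZw1_x) (E_xi E_w2 iZw2_x) (E_xi E_w3 iZw3_x).
by rewrite !(Jmul0l, Jmul0r, addr0).
Qed.

End VanishingDerivation.

Lemma evenMapJ_sub (d1 d2 : J -> J) :
  evenMapJ d1 -> evenMapJ d2 -> evenMapJ (fun c => d1 c - d2 c).
Proof.
by case=> ev1 od1 [ev2 od2]; split=> u uP; rewrite /isEven /isOdd /=;
  [rewrite ev1 // ev2 // | rewrite od1 // od2 //]; rewrite subrr.
Qed.

Lemma DerJ0_evenDerJ d : DerJ0 delta d ->
  exists mu a f1 f2 f3, twisted_der mu a /\ forall c, d c = evenDerJ mu a f1 f2 f3 c.
Proof.
case=> d_lin [d_par d_leib].
have dD u v : d (u + v) = d u + d v by have := d_lin 1 u v; rewrite !scale1r.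
have d0 : d 0 = 0 by apply: (addrI (d 0)); rewrite -dD !addr0.
have dN u : d (- u) = - d u by apply/eqP; rewrite -subr_eq0 opprK -dD addNr d0.
pose mu h := e0 (d (iZ h)); have muE h : mu h = e0 (d (iZ h)) by [].
clearbody mu.
have mu_twisted : twisted_der mu (o0 (d xJ)).
  split=> [k u v | u v | u]; rewrite !muE.
  - by rewrite iZ_linear d_lin; zcomp.
  - by rewrite iZ_mul d_leib; zcomp.
  - by rewrite -[iZ (delta u)]opprK -x_iZ_x dN !d_leib; zcomp.
exists mu, (o0 (d xJ)), (- e3 (d w2)), (e3 (d w1)), (- e2 (d w1)); split=> // c.
apply/eqP; rewrite -subr_eq0; apply/eqP; move: c.
have [G_even G_odd] := evenMapJ_sub d_par (evenDerJ_even (-(e3 (d w2))) (e3 (d w1))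
  (-(e2 (d w1))) mu_twisted).
apply: derivation_eq0_on_generators => //.
- by move=> u v; cbv beta; rewrite dD evenDerJ_add //; jcomp.
- by move=> u v; cbv beta; rewrite d_leib evenDerJ_leibniz //; jcomp.
- by move=> h; coords; rewrite muE; zcomp.
- by coords; mpush mu_twisted; zring.
- by coords; mpush mu_twisted; zring.
- by coords; mpush mu_twisted; zring.
- by coords; mpush mu_twisted; zring.
Qed.

Definition degProj (al : bool * bool) (a : J) : J :=
  match al with
  | (false, false) => mkJ (e0 a) 0 0 0 (o0 a) 0 0 0
  | (true, false) => mkJ 0 (e1 a) 0 0 0 (o1 a) 0 0
  | (false, true) => mkJ 0 0 (e2 a) 0 0 0 (o2 a) 0
  | (true, true) => mkJ 0 0 0 (e3 a) 0 0 0 (o3 a)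
  end.

Lemma inGrP al (a : J) : inGr al a <-> degProj al a = a.
Proof.
split=> [H | <- i]; last first.
  by case: al i => [[] []] [[|[|[|[|n]]]] ?] //= ne; split || case: ne.
have H0 := H (@Ordinal 4 0 isT); have H1 := H (@Ordinal 4 1 isT).
have H2 := H (@Ordinal 4 2 isT); have H3 := H (@Ordinal 4 3 isT).
case: al {H} H0 H1 H2 H3 => [[] []] /= H0 H1 H2 H3; apply: Jext => /=;
  do ?[ by [] | by case: H0 | by case: H1 | by case: H2 | by case: H3 ].
Qed.

Lemma iZ_inGr h : inGr (false, false) (iZ h). Proof. by apply/inGrP; jcomp. Qed.
Lemma xJ_inGr : inGr (false, false) (xJ : J). Proof. by apply/inGrP; jcomp. Qed.
Lemma w1_inGr : inGr (true, false) (w1 : J). Proof. by apply/inGrP; jcomp. Qed.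
Lemma w2_inGr : inGr (false, true) (w2 : J). Proof. by apply/inGrP; jcomp. Qed.

Lemma gradMapJ_inGr al d be (a : J) :
  gradMapJ al d -> inGr be a -> degProj (addGr al be) (d a) = d a.
Proof. by move=> Hd /(Hd be)/inGrP. Qed.

Ltac graded_by_coords := move=> [[] []] c /inGrP <-; apply/inGrP; apply: Jext; coords.

Lemma evenDerJ_graded00 mu a : twisted_der mu a -> gradMapJ (false, false) (evenDerJ mu a 0 0 0).
Proof. by move=> Hmu; graded_by_coords; rewrite ?(mu0 Hmu); dpush; zring. Qed.

Lemma evenDerJ_graded10 f : gradMapJ (true, false) (evenDerJ (fun _ => 0) 0 f 0 0).
Proof. by graded_by_coords; dpush; zring. Qed.

Lemma evenDerJ_graded01 f : gradMapJ (false, true) (evenDerJ (fun _ => 0) 0 0 f 0).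
Proof. by graded_by_coords; dpush; zring. Qed.

Lemma evenDerJ_graded11 f : gradMapJ (true, true) (evenDerJ (fun _ => 0) 0 0 0 f).
Proof. by graded_by_coords; dpush; zring. Qed.

Lemma evenDerJ_w1 mu a f1 f2 f3 : mu 0 = 0 ->
  evenDerJ mu a f1 f2 f3 w1 = mkJ 0 (mu 1) (- f3) f2 0 0 0 0.
Proof. by move=> m0; apply: Jext; coords; rewrite ?m0; zring. Qed.

Lemma evenDerJ_w2 mu a f1 f2 f3 : mu 0 = 0 ->
  evenDerJ mu a f1 f2 f3 w2 = mkJ 0 f3 (mu 1) (- f1) 0 0 0 0.
Proof. by move=> m0; apply: Jext; coords; rewrite ?m0; zring. Qed.

Lemma graded00_evenDerJ d mu a f1 f2 f3 : mu 0 = 0 -> gradMapJ (false, false) d ->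
  (forall c, d c = evenDerJ mu a f1 f2 f3 c) -> [/\ f1 = 0, f2 = 0 & f3 = 0].
Proof.
move=> m0 Hgr dE; have := gradMapJ_inGr Hgr w1_inGr; have := gradMapJ_inGr Hgr w2_inGr.
rewrite !dE (evenDerJ_w1 _ _ _ _ m0) (evenDerJ_w2 _ _ _ _ m0) /mkJ /=.
by case=> f3z /opp_eq0 f1z [_ f2z].
Qed.

Lemma DerJ00_evenDerJ d : DerJ0g delta (false, false) d ->
  exists mu a, twisted_der mu a /\ forall c, d c = evenDerJ mu a 0 0 0 c.
Proof.
case=> Hd Hgr; have [mu [a [f1 [f2 [f3 [Hmu dE]]]]]] := DerJ0_evenDerJ Hd.
have [f1z f2z f3z] := graded00_evenDerJ (mu0 Hmu) Hgr dE.
by exists mu, a; split=> // c; rewrite dE f1z f2z f3z.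
Qed.

Lemma addGr0 al : addGr al (false, false) = al.
Proof. by case: al => [[] []]. Qed.

Lemma outer_evenDerJ al d mu a f1 f2 f3 : al <> (false, false) -> gradMapJ al d ->
  (forall c, d c = evenDerJ mu a f1 f2 f3 c) -> mu = (fun _ => 0) /\ a = 0.
Proof.
move=> al_ne Hgr dE.
have degProj_e0 v : e0 (degProj al v) = 0 /\ o0 (degProj al v) = 0.
  by case: al al_ne {Hgr} => [[] []].
have mu_0 : mu = (fun _ => 0).
  apply: functional_extensionality => h.
  have := congr1 e0 (gradMapJ_inGr Hgr (iZ_inGr h)).
  by rewrite addGr0 (degProj_e0 _).1 dE /= => /esym.
split=> //; have := congr1 o0 (gradMapJ_inGr Hgr xJ_inGr).
by rewrite addGr0 (degProj_e0 _).2 dE mu_0 /= add0r mulr1 => /esym.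
Qed.

Lemma DerJ10_evenDerJ d : DerJ0g delta (true, false) d ->
  exists f, forall c, d c = evenDerJ (fun _ => 0) 0 f 0 0 c.
Proof.
case=> Hd Hgr; have [mu [a [f1 [f2 [f3 [Hmu dE]]]]]] := DerJ0_evenDerJ Hd.
have [mu_0 a0] : mu = (fun _ => 0) /\ a = 0 by apply: outer_evenDerJ Hgr dE.
have := gradMapJ_inGr Hgr w1_inGr.
rewrite dE (evenDerJ_w1 _ _ _ _ (mu0 Hmu)) mu_0 /= /mkJ => -[/opp_eq0 f3z /esym f2z].
by exists f1 => c; rewrite dE mu_0 a0 f2z f3z.
Qed.

Lemma DerJ01_evenDerJ d : DerJ0g delta (false, true) d ->
  exists f, forall c, d c = evenDerJ (fun _ => 0) 0 0 f 0 c.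
Proof.
case=> Hd Hgr; have [mu [a [f1 [f2 [f3 [Hmu dE]]]]]] := DerJ0_evenDerJ Hd.
have [mu_0 a0] : mu = (fun _ => 0) /\ a = 0 by apply: outer_evenDerJ Hgr dE.
have := gradMapJ_inGr Hgr w1_inGr; have := gradMapJ_inGr Hgr w2_inGr.
rewrite !dE (evenDerJ_w1 _ _ _ _ (mu0 Hmu)) (evenDerJ_w2 _ _ _ _ (mu0 Hmu)) mu_0 /= /mkJ.
move=> -[/esym f3z /opp_eq0 f1z] _.
by exists f2 => c; rewrite dE mu_0 a0 f1z f3z.
Qed.

Lemma DerJ11_evenDerJ d : DerJ0g delta (true, true) d ->
  exists f, forall c, d c = evenDerJ (fun _ => 0) 0 0 0 f c.
Proof.
case=> Hd Hgr; have [mu [a [f1 [f2 [f3 [Hmu dE]]]]]] := DerJ0_evenDerJ Hd.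
have [mu_0 a0] : mu = (fun _ => 0) /\ a = 0 by apply: outer_evenDerJ Hgr dE.
have := gradMapJ_inGr Hgr w1_inGr; have := gradMapJ_inGr Hgr w2_inGr.
rewrite !dE (evenDerJ_w1 _ _ _ _ (mu0 Hmu)) (evenDerJ_w2 _ _ _ _ (mu0 Hmu)) mu_0 /= /mkJ.
move=> -[/opp_eq0 f1z] -[/esym f2z].
by exists f3 => c; rewrite dE mu_0 a0 f1z f2z.
Qed.

Definition innerDerJ (p : J) : J -> J :=
  evenDerJ (fun u => - (e0 p * delta u + e0 p * delta u)) (delta (e0 p)) (e1 p) (e2 p) (e3 p).

Lemma innerDerJ_twisted p :
  twisted_der (fun u => - (e0 p * delta u + e0 p * delta u)) (delta (e0 p)).
Proof.
split=> [k u v | u v | u]; dpush; rewrite ?scaleE; dpush; zring.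
Qed.

Lemma innerDerJ_der p : DerJ0 delta (innerDerJ p).
Proof. exact/evenDerJ_der/innerDerJ_twisted. Qed.

Lemma innerDerJ_linear k p q c :
  innerDerJ (k *: p + q) c = k *: innerDerJ p c + innerDerJ q c.
Proof. by apply: Jext; zcomp. Qed.

Lemma innerDerJ0 c : innerDerJ 0 c = 0.
Proof. by apply: Jext; zcomp. Qed.

Lemma innerDerJ_sum n (k : 'I_n -> F) (p : 'I_n -> J) c :
  \sum_(i < n) k i *: innerDerJ (p i) c = innerDerJ (\sum_(i < n) k i *: p i) c.
Proof.
by rewrite (linear_fun_sum (L := fun p => innerDerJ p c)) // => *; exact: innerDerJ_linear.
Qed.

Lemma Dop_ff a b c :
  Dop delta false false a b c = Jmul delta a (Jmul delta b c) - Jmul delta b (Jmul delta a c).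
Proof. by rewrite /Dop /= expr0 scale1r. Qed.

Lemma Dop_tt a b c :
  Dop delta true true a b c = Jmul delta a (Jmul delta b c) + Jmul delta b (Jmul delta a c).
Proof. by rewrite /Dop /= expr1 scaleN1r opprK. Qed.

Lemma DopD pa pb a b u v :
  Dop delta pa pb a b (u + v) = Dop delta pa pb a b u + Dop delta pa pb a b v.
Proof. by rewrite /Dop !JmulDr scalerDr opprD addrACA. Qed.

Definition Dparam (pa pb : bool) (a b : J) : J :=
  match pa, pb with
  | false, false => mkJ 0 (e2 a * e3 b - e3 a * e2 b) (e3 a * e1 b - e1 a * e3 b)
                      (e1 a * e2 b - e2 a * e1 b) 0 0 0 0
  | true, true => mkJ (o0 a * o0 b) (o0 a * o1 b + o1 a * o0 b)
                    (o0 a * o2 b + o2 a * o0 b) (- (o0 a * o3 b + o3 a * o0 b)) 0 0 0 0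
  | _, _ => 0
  end.

Lemma Dop_even a b c : isEven a -> isEven b ->
  Dop delta false false a b c = innerDerJ (Dparam false false a b) c.
Proof. by move=> ea eb; rewrite Dop_ff; apply: Jext; coords; rewrite ea eb /=; dpush; zring. Qed.

Lemma Dop_odd a b c : isOdd a -> isOdd b ->
  Dop delta true true a b c = innerDerJ (Dparam true true a b) c.
Proof. by move=> oa ob; rewrite Dop_tt; apply: Jext; coords; rewrite oa ob /=; dpush; zring. Qed.

Lemma isEvenI (u : J) : o0 u = 0 -> o1 u = 0 -> o2 u = 0 -> o3 u = 0 -> isEven u.
Proof. by case: u => ? [[[? ?] ?] ?] /= -> -> -> ->. Qed.

Lemma isOddI (u : J) : e0 u = 0 -> e1 u = 0 -> e2 u = 0 -> e3 u = 0 -> isOdd u.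
Proof. by case: u => [[[[? ?] ?] ?] ?] /= -> -> -> ->. Qed.

Lemma homog_Jmul p q (u v : J) : homog p u -> homog q v -> homog (p (+) q) (Jmul delta u v).
Proof.
by case: p q => -[] hu hv; [apply: isEvenI | apply: isOddI | apply: isOddI | apply: isEvenI];
  coords; rewrite ?hu ?hv /=; dpush; zring.
Qed.

Lemma homog_lin p k (u v : J) : homog p u -> homog p v -> homog p (u - k *: v).
Proof. by case: p => hu hv; rewrite /homog /isEven /isOdd /= hu hv scaler0 subrr. Qed.

Lemma homog_Dop pa pb q a b c : homog pa a -> homog pb b -> homog q c ->
  homog (pa (+) (pb (+) q)) (Dop delta pa pb a b c).
Proof.
move=> ha hb hc; apply: homog_lin.
  by apply: homog_Jmul => //; apply: homog_Jmul.
by rewrite addbCA; apply: homog_Jmul => //; apply: homog_Jmul.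
Qed.

Definition evenPart (u : J) : J := (u.1, 0).
Definition oddPart (u : J) : J := (0, u.2).

Lemma evenPart_oddPart u : evenPart u + oddPart u = u.
Proof. by case: u => u1 u2; rewrite /evenPart /oddPart; congr (_, _); rewrite /= ?addr0 ?add0r. Qed.

Lemma evenPart_linear k u v : evenPart (k *: u + v) = k *: evenPart u + evenPart v.
Proof. by rewrite /evenPart; congr (_, _); rewrite /= scaler0 addr0. Qed.

Lemma oddPart_linear k u v : oddPart (k *: u + v) = k *: oddPart u + oddPart v.
Proof. by rewrite /oddPart; congr (_, _); rewrite /= scaler0 addr0. Qed.

Lemma evenPart_even u : homog false (evenPart u). Proof. by []. Qed.
Lemma oddPart_odd u : homog true (oddPart u). Proof. by []. Qed.

Lemma evenPartK u : isEven u -> evenPart u = u.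
Proof. by case: u => u1 u2; rewrite /isEven /evenPart /= => ->. Qed.

Lemma oddPartK u : isOdd u -> oddPart u = u.
Proof. by case: u => u1 u2; rewrite /isOdd /oddPart /= => ->. Qed.

Lemma evenPart_odd u : isOdd u -> evenPart u = 0.
Proof. by rewrite /evenPart => ->. Qed.

Lemma oddPart_even u : isEven u -> oddPart u = 0.
Proof. by rewrite /oddPart => ->. Qed.

Lemma innerDerJ_parts p c :
  evenPart (innerDerJ p (evenPart c)) + oddPart (innerDerJ p (oddPart c)) = innerDerJ p c.
Proof. by apply: Jext; zcomp. Qed.

Lemma Dop_parts pa pb a b c : homog pa a -> homog pb b ->
  evenPart (Dop delta pa pb a b (evenPart c)) + oddPart (Dop delta pa pb a b (oddPart c)) =
  innerDerJ (Dparam pa pb a b) c.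
Proof.
move=> ha hb; have he := homog_Dop ha hb (evenPart_even c).
have ho := homog_Dop ha hb (oddPart_odd c).
move: ha hb he ho; case: pa; case: pb => /= ha hb he ho.
- by rewrite !Dop_odd // innerDerJ_parts.
- by rewrite evenPart_odd // oddPart_even // addr0 innerDerJ0.
- by rewrite evenPart_odd // oddPart_even // addr0 innerDerJ0.
- by rewrite !Dop_even // innerDerJ_parts.
Qed.

Lemma Dsum_parts n (k : 'I_n -> F) (pa pb : 'I_n -> bool) (xs ys : 'I_n -> J) :
  (forall i, homog (pa i) (xs i) /\ homog (pb i) (ys i)) ->
  let D c := \sum_(i < n) k i *: Dop delta (pa i) (pb i) (xs i) (ys i) c in
  forall c, evenPart (D (evenPart c)) + oddPart (D (oddPart c)) =
            innerDerJ (\sum_(i < n) k i *: Dparam (pa i) (pb i) (xs i) (ys i)) c.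
Proof.
move=> Hh D c; rewrite -innerDerJ_sum.
rewrite (linear_fun_sum evenPart_linear) (linear_fun_sum oddPart_linear).
rewrite -big_split /=; apply: eq_bigr => i _; rewrite -scalerDr; case: (Hh i) => ha hb.
by rewrite Dop_parts.
Qed.

Lemma Dsum_add n (k : 'I_n -> F) (pa pb : 'I_n -> bool) (xs ys : 'I_n -> J) u v :
  let D c := \sum_(i < n) k i *: Dop delta (pa i) (pb i) (xs i) (ys i) c in
  D (u + v) = D u + D v.
Proof. by rewrite /= -big_split /=; apply: eq_bigr => i _; rewrite DopD scalerDr. Qed.

Lemma InderJ_even_innerDerJ d : InderJ delta d -> evenMapJ d ->
  exists p, forall c, d c = innerDerJ p c.
Proof.
move=> [n [k [pa [pb [xs [ys [Hh Hd]]]]]]] [ev od].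
exists (\sum_(i < n) k i *: Dparam (pa i) (pb i) (xs i) (ys i)) => c.
rewrite -(Dsum_parts k Hh) -{1}(evenPart_oddPart c) !Hd Dsum_add -!Hd.
by rewrite (evenPartK (ev _ (evenPart_even c))) (oddPartK (od _ (oddPart_odd c))).
Qed.

Definition xZ (g : Z) : J := mkJ 0 0 0 0 g 0 0 0.

Lemma Dop_x_xZ g c : Dop delta true true xJ (xZ g) c = innerDerJ (iZ g) c.
Proof. by rewrite Dop_odd //; apply: Jext; zcomp. Qed.

Lemma Dspan1 A B pA pB a b (d : J -> J) : A a -> B b ->
  (forall c, d c = Dop delta pA pB a b c) -> Dspan delta A B pA pB d.
Proof.
move=> Aa Bb dE; exists 1%N, (fun _ => 1), (fun _ => a), (fun _ => b); split=> // c.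
by rewrite big_ord1 scale1r.
Qed.

Lemma Dspan_InderJ A B pA pB (d : J -> J) :
  (forall a, A a -> homog pA a) -> (forall b, B b -> homog pB b) ->
  Dspan delta A B pA pB d -> InderJ delta d.
Proof.
move=> hA hB [n [k [xs [ys [Hxy Hd]]]]].
exists n, k, (fun _ => pA), (fun _ => pB), xs, ys; split=> // i.
by case: (Hxy i) => /hA ? /hB.
Qed.

Lemma innerDerJ_iZ_InderJ00 g : InderJ00 delta (innerDerJ (iZ g)).
Proof.
split.
  apply: (@Dspan_InderJ (eq xJ) ZxJ true true) => [_ <- | _ [f ->] |] //.
  by apply: (Dspan1 (a := xJ) (b := xZ g)) => //; [exists g | move=> c; rewrite Dop_x_xZ].
split; first by case: (innerDerJ_der (iZ g)) => _ [].
exact: evenDerJ_graded00 (innerDerJ_twisted _).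
Qed.

Lemma InderJ00_innerDerJ d : InderJ00 delta d -> exists g, forall c, d c = innerDerJ (iZ g) c.
Proof.
case=> HI [Hev Hgr]; have [p dE] := InderJ_even_innerDerJ HI Hev.
have [e1z e2z e3z] := graded00_evenDerJ (mu0 (innerDerJ_twisted p)) Hgr dE.
by exists (e0 p) => c; rewrite dE /innerDerJ e1z e2z e3z.
Qed.

Lemma Dspan_form (A B : J -> Prop) pA pB (W : Z -> J -> J) (coord : J -> Z) d :
  (forall k f g c, W (k *: f + g) c = k *: W f c + W g c) ->
  (forall a b c, A a -> B b -> Dop delta pA pB a b c = W (coord b) c) ->
  Dspan delta A B pA pB d -> exists f, forall c, d c = W f c.
Proof.
move=> W_linear DopE [n [k [xs [ys [Hxy Hd]]]]].
exists (\sum_(i < n) k i *: coord (ys i)) => c.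
rewrite Hd (linear_fun_sum (L := W^~ c)) //; apply: eq_bigr => i _.
by case: (Hxy i) => ? ?; rewrite DopE.
Qed.

Lemma InderJ00_Dspan_x d : InderJ00 delta d <-> Dspan delta (eq xJ) ZxJ true true d.
Proof.
split=> [/InderJ00_innerDerJ [g dE] | HD].
  by apply: (Dspan1 (a := xJ) (b := xZ g)) => //; [exists g | move=> c; rewrite dE Dop_x_xZ].
have [g dE] : exists g, forall c, d c = innerDerJ (iZ g) c.
  apply: (Dspan_form (coord := o0) _ _ HD) => [k f g c | _ _ c <- [g ->]].
    by apply: Jext; zcomp.
  exact: Dop_x_xZ.
by rewrite (functional_extensionality _ _ dE); exact: innerDerJ_iZ_InderJ00.
Qed.

Lemma Kext (k l : K) : k.1 = l.1 -> k.2 = l.2 -> k = l.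
Proof. by case: k l => [? ?] [? ?] /= -> ->. Qed.

Ltac kcomp := apply: Kext; zcomp.

Lemma checkK_der mu a : twisted_der mu a -> DerK0 delta (checkK mu a).
Proof.
move=> Hmu; split; first by move=> k u v; apply: Kext; coords; mpush Hmu; zring.
split; last by move=> k l; apply: Kext; coords; mpush Hmu; dpush; zring.
by split=> k; rewrite /isEvenK /isOddK /= => ->; rewrite (mu0 Hmu) ?mulr0 ?addr0.
Qed.

Lemma tildeJ_checkK mu a : mu 0 = 0 -> mu 1 = 0 ->
  forall c, tildeJ (checkK mu a) c = evenDerJ mu a 0 0 0 c.
Proof. by move=> m0 m1 c; apply: Jext; coords; rewrite ?m0 ?m1; dpush; zring. Qed.

Section EvenDerivationK.
Variable dK : K -> K.
Hypothesis dK_der : DerK0 delta dK.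
Local Notation mu := (fun u => (dK (u, 0)).1).
Local Notation a := (dK (0, 1)).2.

Let dK_linear : forall c k l, dK (c *: k + l) = c *: dK k + dK l.
Proof. by case: dK_der. Qed.

Let dK_leibniz : forall k l, dK (Kmul delta k l) = Kmul delta (dK k) l + Kmul delta k (dK l).
Proof. by case: dK_der => _ []. Qed.

Let dK_add k l : dK (k + l) = dK k + dK l.
Proof. by have := dK_linear 1 k l; rewrite !scale1r. Qed.

Let dK0 : dK 0 = 0.
Proof. by apply: (addrI (dK 0)); rewrite -dK_add !addr0. Qed.

Let dK_opp k : dK (- k) = - dK k.
Proof. by have := dK_linear (-1) k 0; rewrite dK0 !scaleN1r !addr0. Qed.

Let dK_Z u : (dK (u, 0)).2 = 0.
Proof. by case: dK_der => _ [[ev _] _]; exact: ev. Qed.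

Let dK_x : (dK (0, 1)).1 = 0.
Proof. by case: dK_der => _ [[_ od] _]; exact: od. Qed.

Let dK_Zx v : dK (0, v) = (0, mu v + a * v).
Proof.
have -> : (0, v) = Kmul delta (v, 0) (0, 1) by kcomp.
rewrite dK_leibniz; apply: Kext; coords; rewrite ?dK_Z ?dK_x; dpush; zring.
Qed.

Lemma DerK0_checkK k : dK k = checkK mu a k.
Proof.
case: k => u v; have uv : (u, v) = (u, 0) + (0, v) :> K by kcomp.
by rewrite {1}uv dK_add dK_Zx; apply: Kext; coords; rewrite ?dK_Z; zring.
Qed.

Lemma DerK0_twisted : twisted_der mu a.
Proof.
split=> [c u v | u v | u].
- have -> : (c *: u + v, 0) = c *: (u, 0) + (v, 0) :> K by kcomp.
  by rewrite dK_linear.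
- have -> : (u * v, 0) = Kmul delta (u, 0) (v, 0) by kcomp.
  by rewrite dK_leibniz; coords; rewrite ?dK_Z; dpush; zring.
- have -> : (delta u, 0) = - Kmul delta (0, 1) (0, u) :> K by kcomp.
  by rewrite dK_opp dK_leibniz dK_Zx; coords; rewrite ?dK_x; dpush; zring.
Qed.

End EvenDerivationK.

Lemma DerJ00_tildeJ d : DerJ0g delta (false, false) d <->
  exists dK : K -> K, DerK0 delta dK /\ forall c, d c = tildeJ dK c.
Proof.
split=> [/DerJ00_evenDerJ [mu [a [Hmu dE]]] | [dK [HK dE]]].
  exists (checkK mu a); split=> [|c]; first exact: checkK_der.
  by rewrite dE tildeJ_checkK ?(mu0 Hmu) ?(mu1 Hmu).
have Hmu := DerK0_twisted HK.
rewrite (functional_extensionality _ _ dE) (functional_extensionality _ _ (DerK0_checkK HK)).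
rewrite (functional_extensionality _ _ (tildeJ_checkK _ (mu0 Hmu) (mu1 Hmu))).
split; [exact: evenDerJ_der | exact: evenDerJ_graded00].
Qed.

Lemma iK_linear c (k l : K) : iK (c *: k + l) = c *: iK k + iK l.
Proof. by apply: Jext; zcomp. Qed.

Lemma iK_Kmul (k l : K) : iK (Kmul delta k l) = Jmul delta (iK k) (iK l).
Proof. by apply: Jext; zcomp. Qed.

Lemma iK_DopK pa pb a b k :
  iK (DopK delta pa pb a b k) = Dop delta pa pb (iK a) (iK b) (iK k).
Proof. by rewrite /DopK /Dop -!iK_Kmul; apply: Jext; zcomp. Qed.

Lemma pK_iK (k : K) : pK (iK k) = k.
Proof. by case: k. Qed.

Lemma homogK_iK p (k : K) : homogK p k -> homog p (iK k).
Proof. by case: k p => u v []; rewrite /= /isOddK /isEvenK /= => ->. Qed.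

Lemma evenPart_iK (k : K) : evenPart (iK k) = iK (k.1, 0).
Proof. by apply: Jext; zcomp. Qed.

Lemma oddPart_iK (k : K) : oddPart (iK k) = iK (0, k.2).
Proof. by apply: Jext; zcomp. Qed.

Lemma DopK_x_xZ g k : DopK delta true true (0, 1) (0, g) k =
  checkK (fun u => - (g * delta u + g * delta u)) (delta g) k.
Proof. by rewrite /DopK /= expr1 scaleN1r opprK; kcomp. Qed.

(* Lift the defining sum of [dK] to [J] through [iK] and apply [Dsum_parts]. *)
Lemma InderK0_checkK dK : InderK0 delta dK ->
  exists g, forall k, dK k = checkK (fun u => - (g * delta u + g * delta u)) (delta g) k.
Proof.
move=> [[n [c [pa [pb [xs [ys [Hh HdK]]]]]]] [ev od]].
have Hh' i : homog (pa i) (iK (xs i)) /\ homog (pb i) (iK (ys i)).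
  by case: (Hh i) => ? ?; split; apply: homogK_iK.
have DE k : iK (dK k) =
    \sum_(i < n) c i *: Dop delta (pa i) (pb i) (iK (xs i)) (iK (ys i)) (iK k).
  by rewrite HdK (linear_fun_sum iK_linear); apply: eq_bigr => i _; rewrite iK_DopK.
set P := \sum_(i < n) c i *: Dparam (pa i) (pb i) (iK (xs i)) (iK (ys i)).
exists (e0 P) => -[u v].
have : iK (dK (u, v)) = innerDerJ P (iK (u, v)).
  rewrite -(Dsum_parts c Hh' (iK (u, v))) evenPart_iK oddPart_iK -!DE.
  rewrite evenPartK; last exact: (homogK_iK (p := false) (ev (u, 0) erefl)).
  rewrite oddPartK; last exact: (homogK_iK (p := true) (od (0, v) erefl)).
  rewrite !DE; have -> : iK (u, v) = iK (u, 0) + iK (0, v) by apply: Jext; zcomp.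
  by rewrite Dsum_add.
by move/(congr1 pK); rewrite pK_iK => ->; kcomp.
Qed.

Lemma InderJ00_tildeJ d : InderJ00 delta d <->
  exists dK : K -> K, InderK0 delta dK /\ forall c, d c = tildeJ dK c.
Proof.
split=> [/InderJ00_innerDerJ [g dE] | [dK [/InderK0_checkK [g dKE] dE]]].
  exists (DopK delta true true (0, 1) (0, g)); split.
    split; first by exists 1%N, (fun _ => 1), (fun _ => true), (fun _ => true),
      (fun _ => (0, 1)), (fun _ => (0, g)); split=> // k; rewrite big_ord1 scale1r.
    rewrite (functional_extensionality _ _ (DopK_x_xZ g)).
    by case: (checkK_der (innerDerJ_twisted (iZ g))) => _ [].
  move=> c; rewrite dE (functional_extensionality _ _ (DopK_x_xZ g)) tildeJ_checkK //.
    by rewrite delta0; zring.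
  by rewrite delta1; zring.
rewrite (functional_extensionality _ _ dE) (functional_extensionality _ _ dKE).
rewrite (functional_extensionality _ _ (tildeJ_checkK _ _ _)).
- exact: innerDerJ_iZ_InderJ00 g.
- by rewrite delta0; zring.
- by rewrite delta1; zring.
Qed.

Lemma InderJ00_tildeJ_check d : InderJ00 delta d <->
  exists h a : Z,
    (forall g, h * delta (delta g) - delta (h * delta g) = 2%:R * a * delta g) /\
    forall c, d c = tildeJ (checkK (fun g => h * delta g) a) c.
Proof.
split=> [/InderJ00_innerDerJ [g dE] | [h [a [Hha dE]]]].
  exists (- (g + g)), (delta g); split=> [u | c]; first by rewrite mulr2n; dpush; zring.
  rewrite dE tildeJ_checkK; first by apply: Jext; zcomp.
    by rewrite delta0; zring.
  by rewrite delta1; zring.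
have ha : delta h + (a + a) = 0.
  apply: delta_annihilator_eq0 => u.
  transitivity (2%:R * a * delta u - (h * delta (delta u) - delta (h * delta u))).
    by rewrite mulr2n; dpush; zring.
  by rewrite Hha subrr.
have [g gE] := half_exists (- h).
have aE : a = delta g by apply: double_inj; rewrite -deltaD gE deltaN -[RHS]addr0 -ha addKr.
have -> : d = innerDerJ (iZ g).
  apply: functional_extensionality => c; rewrite dE tildeJ_checkK.
  - by rewrite -[h]opprK -gE aE; apply: Jext; zcomp.
  - by rewrite delta0; zring.
  - by rewrite delta1; zring.
exact: innerDerJ_iZ_InderJ00.
Qed.

Lemma DerJ10_Dspan d : DerJ0g delta (true, false) d <-> Dspan delta (eq w2) Zw3 false false d.
Proof.
split=> [/DerJ10_evenDerJ [f dE] | HD].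
  apply: (Dspan1 (a := w2) (b := mkJ 0 0 0 f 0 0 0 0)) => //; first by exists f.
  by move=> c; rewrite dE Dop_ff; apply: Jext; zcomp.
have [f dE] : exists f, forall c, d c = evenDerJ (fun _ => 0) 0 f 0 0 c.
  apply: (Dspan_form (coord := e3) _ _ HD) => [k f g c | _ _ c <- [f ->]].
    by apply: Jext; zcomp.
  by rewrite Dop_ff; apply: Jext; zcomp.
rewrite (functional_extensionality _ _ dE).
by split; [exact/evenDerJ_der/twisted_der0 | exact: evenDerJ_graded10].
Qed.

Lemma DerJ01_Dspan d : DerJ0g delta (false, true) d <-> Dspan delta (eq w3) Zw1 false false d.
Proof.
split=> [/DerJ01_evenDerJ [f dE] | HD].
  apply: (Dspan1 (a := w3) (b := mkJ 0 f 0 0 0 0 0 0)) => //; first by exists f.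
  by move=> c; rewrite dE Dop_ff; apply: Jext; zcomp.
have [f dE] : exists f, forall c, d c = evenDerJ (fun _ => 0) 0 0 f 0 c.
  apply: (Dspan_form (coord := e1) _ _ HD) => [k f g c | _ _ c <- [f ->]].
    by apply: Jext; zcomp.
  by rewrite Dop_ff; apply: Jext; zcomp.
rewrite (functional_extensionality _ _ dE).
by split; [exact/evenDerJ_der/twisted_der0 | exact: evenDerJ_graded01].
Qed.

Lemma DerJ11_Dspan d : DerJ0g delta (true, true) d <-> Dspan delta (eq w1) Zw2 false false d.
Proof.
split=> [/DerJ11_evenDerJ [f dE] | HD].
  apply: (Dspan1 (a := w1) (b := mkJ 0 0 f 0 0 0 0 0)) => //; first by exists f.
  by move=> c; rewrite dE Dop_ff; apply: Jext; zcomp.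
have [f dE] : exists f, forall c, d c = evenDerJ (fun _ => 0) 0 0 0 f c.
  apply: (Dspan_form (coord := e2) _ _ HD) => [k f g c | _ _ c <- [f ->]].
    by apply: Jext; zcomp.
  by rewrite Dop_ff; apply: Jext; zcomp.
rewrite (functional_extensionality _ _ dE).
by split; [exact/evenDerJ_der/twisted_der0 | exact: evenDerJ_graded11].
Qed.

Lemma DerJ0_decompose d : DerJ0 delta d ->
  exists d00 d10 d01 d11 : J -> J,
    [/\ DerJ0g delta (false, false) d00, DerJ0g delta (true, false) d10,
        DerJ0g delta (false, true) d01, DerJ0g delta (true, true) d11 &
        forall c, d c = d00 c + d10 c + d01 c + d11 c].
Proof.
move=> /DerJ0_evenDerJ [mu [a [f1 [f2 [f3 [Hmu dE]]]]]].
exists (evenDerJ mu a 0 0 0), (evenDerJ (fun _ => 0) 0 f1 0 0),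
  (evenDerJ (fun _ => 0) 0 0 f2 0), (evenDerJ (fun _ => 0) 0 0 0 f3); split.
- by split; [exact: evenDerJ_der | exact: evenDerJ_graded00].
- by split; [exact/evenDerJ_der/twisted_der0 | exact: evenDerJ_graded10].
- by split; [exact/evenDerJ_der/twisted_der0 | exact: evenDerJ_graded01].
- by split; [exact/evenDerJ_der/twisted_der0 | exact: evenDerJ_graded11].
- by move=> c; rewrite dE; apply: Jext; zcomp.
Qed.

Lemma zero_graded al : gradMapJ al (fun _ : J => 0).
Proof. by move=> be a _ [[|[|[|[|?]]]] ?]. Qed.

Lemma DerJ0_decompose_direct d00 d10 d01 d11 :
  DerJ0g delta (false, false) d00 -> DerJ0g delta (true, false) d10 ->
  DerJ0g delta (false, true) d01 -> DerJ0g delta (true, true) d11 ->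
  (forall c, d00 c + d10 c + d01 c + d11 c = 0) ->
  forall c, [/\ d00 c = 0, d10 c = 0, d01 c = 0 & d11 c = 0].
Proof.
move=> /DerJ00_evenDerJ [mu [a [Hmu E00]]] /DerJ10_evenDerJ [f1 E10].
move=> /DerJ01_evenDerJ [f2 E01] /DerJ11_evenDerJ [f3 E11] sum0.
have E c : 0 = evenDerJ mu a f1 f2 f3 c.
  by rewrite -(sum0 c) E00 E10 E01 E11; apply: Jext; zcomp.
have [f1z f2z f3z] := graded00_evenDerJ (mu0 Hmu) (@zero_graded _) E.
have [mu_0 a0] : mu = (fun _ => 0) /\ a = 0.
  by apply: (outer_evenDerJ (al := (true, false))) (@zero_graded _) E.
by move=> c; rewrite E00 E10 E01 E11 mu_0 a0 f1z f2z f3z; split; apply: Jext; zcomp.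
Qed.

Lemma DerJ0g_outer_inner al d : al <> (false, false) -> DerJ0g delta al d -> InderJ delta d.
Proof.
case: al => -[] [] // _.
- by move=> /DerJ11_Dspan; apply: Dspan_InderJ => [_ <- | _ [f ->]].
- by move=> /DerJ10_Dspan; apply: Dspan_InderJ => [_ <- | _ [f ->]].
- by move=> /DerJ01_Dspan; apply: Dspan_InderJ => [_ <- | _ [f ->]].
Qed.

End ChengKacDerivations.

Theorem proposition4p1 (F : fieldType) (Z : comAlgType F) (delta : Z -> Z)
    (hchar : 2%N \notin [pchar F])
    (hlin : forall (k : F) (u v : Z), delta (k *: u + v) = k *: delta u + delta v)
    (hleib : forall u v : Z, delta (u * v) = delta u * v + u * delta v)
    (hspan : forall z : Z, exists (n : nat) (k : 'I_n -> F) (fs gs : 'I_n -> Z),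
        z = \sum_(i < n) k i *: (fs i * delta (gs i))) :
  (forall d : @J F Z -> @J F Z,
      DerJ0g delta (false, false) d <->
      exists dK : @K F Z -> @K F Z, DerK0 delta dK /\ forall c, d c = tildeJ dK c) /\
  (forall d : @J F Z -> @J F Z,
      InderJ00 delta d <-> Dspan delta (eq xJ) ZxJ true true d) /\
  (forall d : @J F Z -> @J F Z,
      InderJ00 delta d <->
      exists dK : @K F Z -> @K F Z, InderK0 delta dK /\ forall c, d c = tildeJ dK c) /\
  (forall d : @J F Z -> @J F Z,
      InderJ00 delta d <->
      exists h a : Z,
        (forall g : Z, h * delta (delta g) - delta (h * delta g) = 2%:R * a * delta g) /\
        forall c, d c = tildeJ (checkK (fun g => h * delta g) a) c) /\
  (forall d : @J F Z -> @J F Z,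
      DerJ0g delta (true, false) d <-> Dspan delta (eq w2) Zw3 false false d) /\
  (forall d : @J F Z -> @J F Z,
      DerJ0g delta (false, true) d <-> Dspan delta (eq w3) Zw1 false false d) /\
  (forall d : @J F Z -> @J F Z,
      DerJ0g delta (true, true) d <-> Dspan delta (eq w1) Zw2 false false d) /\
  (forall d : @J F Z -> @J F Z, DerJ0 delta d ->
      exists d00 d10 d01 d11 : @J F Z -> @J F Z,
        [/\ DerJ0g delta (false, false) d00, DerJ0g delta (true, false) d10,
            DerJ0g delta (false, true) d01, DerJ0g delta (true, true) d11 &
            forall c, d c = d00 c + d10 c + d01 c + d11 c]) /\
  (forall d00 d10 d01 d11 : @J F Z -> @J F Z,
      DerJ0g delta (false, false) d00 -> DerJ0g delta (true, false) d10 ->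
      DerJ0g delta (false, true) d01 -> DerJ0g delta (true, true) d11 ->
      (forall c, d00 c + d10 c + d01 c + d11 c = 0) ->
      forall c, [/\ d00 c = 0, d10 c = 0, d01 c = 0 & d11 c = 0]) /\
  (forall (al : bool * bool) (d : @J F Z -> @J F Z),
      al <> (false, false) -> DerJ0g delta al d -> InderJ delta d).
Proof.
split; first by move=> d; apply: DerJ00_tildeJ.
split; first by move=> d; apply: InderJ00_Dspan_x.
split; first by move=> d; apply: InderJ00_tildeJ.
split; first by move=> d; apply: InderJ00_tildeJ_check.
split; first by move=> d; apply: DerJ10_Dspan.
split; first by move=> d; apply: DerJ01_Dspan.
split; first by move=> d; apply: DerJ11_Dspan.
split; first by move=> d; apply: DerJ0_decompose.
split; first by move=> d00 d10 d01 d11; apply: DerJ0_decompose_direct.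
by move=> al d; apply: DerJ0g_outer_inner.
Qed.
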